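(* Let $R_{n,d}$ be a $d$-regular simple graph on $n$ vertices. Then $m(R_{n,d})=\frac{n}{d+1}$.
   Context: For a simple graph $G$ with adjacency matrix $A$, $\mathrm{SOL}(G)$ is the set of $x\in\mathbb{R}^n$ with $x\geq 0$, $(A+I)x\geq\mathbf{e}$ and $x^\top((A+I)x-\mathbf{e})=0$ ($I$ identity, $\mathbf{e}$ all-ones), and $m(G):=\min\{\mathbf{e}^\top x\mid x\in\mathrm{SOL}(G)\}$. *)

From HB Require Import structures.
From mathcomp Require Import all_boot all_order all_algebra.
Set Implicit Arguments. Unset Strict Implicit. Unset Printing Implicit Defensive.
Import Order.TTheory GRing.Theory Num.Theory.
Local Open Scope ring_scope.

Definition simple_graph (n : nat) (e : rel 'I_n) : Prop :=
  symmetric e /\ irreflexive e.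

Definition regular (n d : nat) (e : rel 'I_n) : Prop :=
  forall i : 'I_n, #|[pred j | e i j]| = d.

Definition adjmx (R : nzRingType) (n : nat) (e : rel 'I_n) : 'M[R]_n :=
  \matrix_(i, j) (e i j)%:R.

Definition SOL (R : realFieldType) (n : nat) (e : rel 'I_n) (x : 'cV[R]_n) : Prop :=
  let M := adjmx R e + 1%:M in
  (forall i, 0 <= x i 0) /\
  (forall i, 1 <= (M *m x) i 0) /\
  (x^T *m (M *m x - const_mx 1)) 0 0 = 0.

Definition is_m (R : realFieldType) (n : nat) (e : rel 'I_n) (v : R) : Prop :=
  (exists2 x, SOL e x & \sum_i x i 0 = v) /\
  (forall x, SOL e x -> v <= \sum_i x i 0).

From mathcomp Require Import all_boot all_algebra.
Local Open Scope ring_scope.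
Import GRing.Theory Num.Theory.

(* In a d-regular graph every row and column of A + I sums to d + 1.  So the
   constant vector with entries 1/(d+1) solves (A + I)x = e, hence lies in
   SOL(G) with total n/(d+1); and for any x in SOL(G), summing the constraints
   (A + I)x >= e gives n <= e^T (A + I) x = (d+1) e^T x. *)

Lemma rowsum_adjmx1 (R : nzRingType) (n d : nat) (e : rel 'I_n) (i : 'I_n) :
  regular d e -> \sum_j (adjmx R e + 1%:M) i j = d.+1%:R.
Proof.
move=> reg; under eq_bigr do rewrite !mxE.
rewrite big_split /= -!natr_sum.
have -> : (\sum_j (e i j : nat))%N = d.
  rewrite -(reg i) -sum1_card [RHS]big_mkcond /=.
  by apply: eq_bigr => j _; rewrite inE; case: (e i j).
rewrite (bigD1 i) //= eqxx big1 ?addn0 -?natrD ?addn1 // => j /negbTE.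
by rewrite eq_sym => ->.
Qed.

Lemma colsum_adjmx1 (R : nzRingType) (n d : nat) (e : rel 'I_n) (j : 'I_n) :
  symmetric e -> regular d e -> \sum_i (adjmx R e + 1%:M) i j = d.+1%:R.
Proof.
move=> sym reg; rewrite -(rowsum_adjmx1 R n d e j reg).
by apply: eq_bigr => i _; rewrite !mxE sym eq_sym.
Qed.

Lemma sum_mulmx_col (R : pzRingType) (n : nat) (M : 'M[R]_n) (x : 'cV[R]_n) :
  \sum_i (M *m x) i 0 = \sum_j (\sum_i M i j) * x j 0.
Proof.
under eq_bigr do rewrite mxE.
by rewrite exchange_big; apply: eq_bigr => j _; rewrite /= mulr_suml.
Qed.

Lemma mulmx_adjmx1_const (R : numFieldType) (n d : nat) (e : rel 'I_n) :
  regular d e ->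
  (adjmx R e + 1%:M) *m const_mx (d.+1%:R^-1) = const_mx 1 :> 'cV[R]_n.
Proof.
move=> reg; apply/matrixP => i k; rewrite [LHS]mxE [RHS]mxE.
under eq_bigr do rewrite [const_mx _ _ _]mxE.
by rewrite -mulr_suml (rowsum_adjmx1 R n d e i reg) mulfV // pnatr_eq0.
Qed.

Lemma SOL_const (R : realFieldType) (n d : nat) (e : rel 'I_n) :
  regular d e -> SOL e (const_mx (d.+1%:R^-1) : 'cV[R]_n).
Proof.
move=> reg; rewrite /SOL mulmx_adjmx1_const // subrr mulmx0 mxE.
by split=> [i|]; [|split=> // i]; rewrite mxE // invr_ge0 ler0n.
Qed.

Lemma SOL_sum_ge (R : realFieldType) (n d : nat) (e : rel 'I_n) (x : 'cV[R]_n) :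
  symmetric e -> regular d e -> SOL e x -> n%:R <= d.+1%:R * \sum_i x i 0.
Proof.
move=> sym reg [_ [cover _]].
have -> : d.+1%:R * \sum_i x i 0 = \sum_i ((adjmx R e + 1%:M) *m x) i 0.
  rewrite sum_mulmx_col mulr_sumr.
  by apply: eq_bigr => j _; rewrite (colsum_adjmx1 R n d e j sym reg).
by rewrite -[n in n%:R]card_ord -sumr_const ler_sum.
Qed.

Theorem lemma5 (R : realFieldType) (n d : nat) (e : rel 'I_n) :
  simple_graph e -> regular d e ->
  is_m e (n%:R / (d.+1)%:R : R).
Proof.
move=> [sym _] reg; split.
  exists (const_mx (d.+1%:R^-1)); first exact: SOL_const.
  by under eq_bigr do rewrite mxE; rewrite sumr_const card_ord mulr_natl.
move=> x solx; rewrite ler_pdivrMr ?ltr0n // mulrC.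
exact: SOL_sum_ge solx.
Qed.
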